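(* Let $\Gamma$ be a finite group, $G=(V,E)$ a finite simple graph, $\phi:\Gamma\to\operatorname{Aut}(G)$ a homomorphism and $\tau:\Gamma\to O(\mathbb{R}^3)$ an injective homomorphism whose image $\tau(\Gamma)$ is one of the groups $C_i,C_s,C_2,C_{2v},C_{2h}$ below. If $(G,p)$ is a $\Gamma$-symmetric framework on $\mathcal{Y}$ (with respect to $\phi,\tau$) which is isostatic, then $G$ is $(2,2)$-tight and: - if $\tau(\Gamma)=C_i$: the element mapped to the inversion fixes no edge; - if $\tau(\Gamma)=C_s$: the element mapped to the reflection fixes no edge; - if $\tau(\Gamma)=C_2$: the element mapped to $c_2'$ fixes either exactly two edges and no vertex, or no edge and exactly one vertex; - if $\tau(\Gamma)=C_{2v}$: the elements mapped to $\sigma$ and $\sigma'$ fix no edge, and the element mapped to $c_2'$ fixes either exactly two edges and no vertex, or no edge and exactly one vertex; - if $\tau(\Gamma)=C_{2h}$: the elements mapped to $\sigma$ and to the inversion fix no edge, and the element mapped to $c_2'$ fixes exactly two edges and no vertex.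
   Context: $\mathcal{Y}=\{(x,y,z)\in\mathbb{R}^3:x^2+y^2=1\}$. A framework on $\mathcal{Y}$ is a pair $(G,p)$, $G=(V,E)$ finite simple, $p:V\to\mathcal{Y}$ with $p(u)\ne p(v)$ for $uv\in E$. Its rigidity matrix $R_{\mathcal{Y}}(G,p)$ is the $(|E|+|V|)\times 3|V|$ matrix with, for each edge $v_iv_j$, a row with $p(v_i)-p(v_j)$ in the columns of $v_i$, $p(v_j)-p(v_i)$ in the columns of $v_j$, zeros elsewhere, and for each vertex $v_i$ with $p(v_i)=(x_i,y_i,z_i)$ a row with $(x_i,y_i,0)$ in the columns of $v_i$, zeros elsewhere. Trivial infinitesimal motions are $u_i=(0,0,a)+b(-y_i,x_i,0)$. $(G,p)$ is infinitesimally rigid if every kernel vector of $R_{\mathcal{Y}}(G,p)$ is trivial, independent if its rows are linearly independent, isostatic if both. $(G,p)$ is $\Gamma$-symmetric w.r.t. $\phi,\tau$ if $\tau(\gamma)p(v)=p(\phi(\gamma)v)$ for all $v,\gamma$. A vertex $v$ is fixed by $\gamma$ if $\phi(\gamma)v=v$; an edge $uv$ is fixed if $\phi(\gamma)$ fixes both endpoints or swaps them. A graph is $(2,2)$-sparse if every subgraph $(V',E')$ with $V'\neq\emptyset$ has $|E'|\le 2|V'|-2$, and $(2,2)$-tight if moreover $|E|=2|V|-2$. Symmetry operations: $\sigma$ = reflection in a plane containing the $z$-axis; $\sigma'$ = reflection in the $xy$-plane; $c_2'$ = half-turn about a line through the origin perpendicular to the $z$-axis; $\varphi=-I$ the inversion.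 Groups: $C_i=\{\mathrm{id},\varphi\}$; $C_s=\{\mathrm{id},\sigma\}$ or $\{\mathrm{id},\sigma'\}$; $C_2=\{\mathrm{id},c_2'\}$; $C_{2v}=\{\mathrm{id},\sigma,\sigma',c_2'\}$; $C_{2h}=\{\mathrm{id},\sigma,c_2',\varphi\}$ (with the axis of $c_2'$ perpendicular to the plane of $\sigma$). *)

From HB Require Import structures.
From mathcomp Require Import all_boot all_order all_algebra fingroup.
From mathcomp Require Import reals.
Set Implicit Arguments. Unset Strict Implicit. Unset Printing Implicit Defensive.
Import Order.TTheory GRing.Theory Num.Theory.
Local Open Scope ring_scope.

Section CylinderDefs.
Variable R : realType.

Definition vec3 (a b c : R) : 'rV[R]_3 := \row_(i < 3) [:: a; b; c]`_i.

Definition xco (x : 'rV[R]_3) : R := x 0 (0 : 'I_3).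
Definition yco (x : 'rV[R]_3) : R := x 0 (1 : 'I_3).
Definition zco (x : 'rV[R]_3) : R := x 0 (2 : 'I_3).

Definition on_cylinder (x : 'rV[R]_3) : Prop := xco x ^+ 2 + yco x ^+ 2 = 1.

Variable V : finType.

Definition simple_graph (E : {set {set V}}) : Prop := forall e, e \in E -> #|e| = 2%N.

Definition framework_on_Y (E : {set {set V}}) (p : V -> 'rV[R]_3) : Prop :=
  (forall v, on_cylinder (p v)) /\
  (forall u v, [set u; v] \in E -> p u <> p v).

Definition other (e : {set V}) (w : V) : V := odflt w [pick x in e :\ w].

Definition rig_entry (p : V -> 'rV[R]_3) (r : {set V} + V) (c : V * 'I_3) : R :=
  match r with
  | inl e => if c.1 \in e then (p c.1 - p (other e c.1)) 0 c.2 else 0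
  | inr v => if c.1 == v then
               (if c.2 == (2 : 'I_3) then 0 else p v 0 c.2) else 0
  end.

(* R_Y(G,p): a (|E| + |V|) x 3|V| matrix; column j corresponds to the pair
   enum_val j = (v, k), i.e. coordinate k of vertex v. *)
Definition rigidity_matrix (E : {set {set V}}) (p : V -> 'rV[R]_3)
  : 'M[R]_(#|E| + #|{: V}|, #|{: V * 'I_3}|) :=
  \matrix_(i, j)
    match split i with
    | inl k => rig_entry p (inl (enum_val k)) (enum_val j)
    | inr k => rig_entry p (inr (enum_val k)) (enum_val j)
    end.

Definition vel (u : 'cV[R]_(#|{: V * 'I_3}|)) (v : V) (k : 'I_3) : R :=
  u (enum_rank (v, k)) 0.

Definition trivial_motion (p : V -> 'rV[R]_3) (u : 'cV[R]_(#|{: V * 'I_3}|)) : Prop :=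
  exists a b : R, forall v k,
    vel u v k = (vec3 0 0 a + b *: vec3 (- yco (p v)) (xco (p v)) 0) 0 k.

Definition inf_rigid (E : {set {set V}}) (p : V -> 'rV[R]_3) : Prop :=
  forall u, rigidity_matrix E p *m u = 0 -> trivial_motion p u.

Definition independent (E : {set {set V}}) (p : V -> 'rV[R]_3) : Prop :=
  row_free (rigidity_matrix E p).

Definition isostatic (E : {set {set V}}) (p : V -> 'rV[R]_3) : Prop :=
  inf_rigid E p /\ independent E p.

Definition sparse22 (E : {set {set V}}) : Prop :=
  forall (V' : {set V}) (E' : {set {set V}}),
    V' != set0 -> E' \subset E -> (forall e, e \in E' -> e \subset V') ->
    (#|E'| + 2 <= 2 * #|V'|)%N.

Definition tight22 (E : {set {set V}}) : Prop :=
  sparse22 E /\ (#|E| + 2 = 2 * #|{: V}|)%N.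

Variable gT : finGroupType.

Definition aut_hom (E : {set {set V}}) (phi : gT -> V -> V) : Prop :=
  (forall g, injective (phi g)) /\
  (forall g (e : {set V}), ((phi g @: e) \in E) = (e \in E)) /\
  (forall g h v, phi (g * h)%g v = phi g (phi h v)).

(* tau : Gamma -> O(R^3) an injective group homomorphism (matrices act on
   column vectors) *)
Definition orth_inj_hom (tau : gT -> 'M[R]_3) : Prop :=
  (forall g, tau g *m (tau g)^T = 1%:M) /\
  (forall g h, tau (g * h)%g = tau g *m tau h) /\
  injective tau.

Definition gamma_symmetric (phi : gT -> V -> V) (tau : gT -> 'M[R]_3)
  (p : V -> 'rV[R]_3) : Prop :=
  forall g v, p (phi g v) = (tau g *m (p v)^T)^T.

Definition fixed_edges (E : {set {set V}}) (phi : gT -> V -> V) (g : gT)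
  : {set {set V}} := [set e in E | phi g @: e == e].

Definition fixed_vertices (phi : gT -> V -> V) (g : gT) : {set V} :=
  [set v | phi g v == v].

Definition image_is (tau : gT -> 'M[R]_3) (S : seq 'M[R]_3) : Prop :=
  forall M, (exists g, tau g = M) <-> M \in S.

End CylinderDefs.

Section SymOps.
Variable R : realType.

Definition unit2 (a b : R) : Prop := a ^+ 2 + b ^+ 2 = 1.

(* sigma: reflection in the plane containing the z-axis with unit normal (a,b,0) *)
Definition refl_vert (a b : R) : 'M[R]_3 :=
  1%:M - 2 *: ((vec3 a b 0)^T *m vec3 a b 0).

Definition refl_horiz : 'M[R]_3 := diag_mx (vec3 1 1 (-1)).

(* c_2': half-turn about the line through 0 with unit direction (a,b,0) *)
Definition halfturn (a b : R) : 'M[R]_3 :=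
  2 *: ((vec3 a b 0)^T *m vec3 a b 0) - 1%:M.

Definition inversion : 'M[R]_3 := - 1%:M.

Variable gT : finGroupType.

Definition is_Ci (tau : gT -> 'M[R]_3) : Prop := image_is tau [:: 1%:M; inversion].
Definition is_Cs_vert (tau : gT -> 'M[R]_3) (a b : R) : Prop :=
  unit2 a b /\ image_is tau [:: 1%:M; refl_vert a b].
Definition is_Cs_horiz (tau : gT -> 'M[R]_3) : Prop :=
  image_is tau [:: 1%:M; refl_horiz].
Definition is_C2 (tau : gT -> 'M[R]_3) (a b : R) : Prop :=
  unit2 a b /\ image_is tau [:: 1%:M; halfturn a b].
Definition is_C2v (tau : gT -> 'M[R]_3) (a b c d : R) : Prop :=
  unit2 a b /\ unit2 c d /\
  image_is tau [:: 1%:M; refl_vert a b; refl_horiz; halfturn c d].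
(* C_2h: the axis of c_2' is perpendicular to the plane of sigma *)
Definition is_C2h (tau : gT -> 'M[R]_3) (a b : R) : Prop :=
  unit2 a b /\
  image_is tau [:: 1%:M; refl_vert a b; halfturn a b; inversion].

Definition allowed_group (tau : gT -> 'M[R]_3) : Prop :=
  is_Ci tau \/ (exists a b, is_Cs_vert tau a b) \/ is_Cs_horiz tau \/
  (exists a b, is_C2 tau a b) \/ (exists a b c d, is_C2v tau a b c d) \/
  (exists a b, is_C2h tau a b).

End SymOps.

Arguments refl_horiz {R}.
Arguments inversion {R}.

From HB Require Import structures.
From mathcomp Require Import all_boot all_order all_algebra fingroup.
From mathcomp Require Import reals.
From mathcomp Require Import ring lra zify.
Import Order.TTheory GRing.Theory Num.Theory.
Local Open Scope ring_scope.
Set Implicit Arguments. Unset Strict Implicit. Unset Printing Implicit Defensive.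

(* Let [g] act with [tau g = T]. The rigidity matrix intertwines the permutation action of [g]
   on edges and vertices (its rows) with the action of [T] on vertex coordinates (its columns).
   As the framework is isostatic, the rows are independent and the kernel is the plane of
   trivial motions (translation along and rotation about the z-axis), on which [T] acts by
   [diag(ez, er)]. Comparing traces gives
     #fixed edges + #fixed vertices = #fixed vertices * tr T - (ez + er).
   For [g = 1] this says |E| + |V| = 3|V| - 2, and for the inversion, the reflections and the
   half-turns it forces the stated fixed-point counts. In C_2h the half-turn commutes with the
   reflection, so a unique vertex fixed by it would be fixed by both, hence by [-I], which no
   point of the cylinder is. Sparsity is the same rank count applied to a subframework. *)

Section LinearAlgebra.
Variable F : fieldType.

Lemma row_free_rowsub m m' n (f : 'I_m' -> 'I_m) (A : 'M[F]_(m, n)) :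
  injective f -> row_free A -> row_free (rowsub f A).
Proof.
move=> f_inj freeA; rewrite /row_free rowsubE mxrankMfree //.
have rowsubK : rowsub f 1%:M *m colsub f 1%:M = 1%:M :> 'M[F]_m'.
  by rewrite -mxsub_mul mul1mx; apply/matrixP => i j; rewrite !mxE (inj_eq f_inj).
by rewrite eqn_leq rank_leq_row -[X in (X <= _)%N](mxrank1 F m') -rowsubK mxrankM_maxl.
Qed.

Lemma mulmx_colsub_supp m n p (W : {set 'I_n}) (A : 'M[F]_(m, n)) (B : 'M_(n, p)) :
  (forall i c, c \notin W -> A i c = 0) ->
  colsub (fun j : 'I_#|W| => enum_val j) A *m rowsub (fun j : 'I_#|W| => enum_val j) B
    = A *m B.
Proof.
move=> A0; apply/matrixP => i k; rewrite !mxE.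
under eq_bigr do rewrite !mxE.
rewrite -(big_enum_val (fun c => A i c * B c k)) big_mkcond /=.
apply: eq_bigr => c _; case: ifP => // /negbT /A0 ->; by rewrite mul0r.
Qed.

Lemma mxtrace_intertwined m n k (P : 'M[F]_m) (A : 'M_(m, n)) (rho : 'M_n)
    (K : 'M_(n, k)) (L : 'M_(k, n)) (D : 'M_k) :
  row_free A -> A *m K = 0 -> L *m K = 1%:M ->
  (forall u : 'cV_n, A *m u = 0 -> exists w, u = K *m w) ->
  P *m A = A *m rho -> rho *m K = K *m D ->
  \tr P = \tr rho - \tr D.
Proof.
move=> /row_freeP[S AS1] AK0 LK1 kerA PA rhoK.
pose W := 1%:M - S *m A.
have AW0 : A *m W = 0 by rewrite mulmxBr mulmx1 mulmxA AS1 mul1mx subrr.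
have KLW : K *m (L *m W) = W.
  apply/matrixP => i j; have /kerA[w Ww] : A *m col j W = 0.
    by rewrite colE mulmxA AW0 mul0mx.
  have : K *m (L *m col j W) = col j W by rewrite Ww [L *m _]mulmxA LK1 mul1mx.
  by rewrite !colE !mulmxA -!colE => /matrixP/(_ i 0); rewrite !mxE.
have WK : W *m K = K by rewrite mulmxBl mul1mx -mulmxA AK0 mulmx0 subr0.
have -> : \tr P = \tr (rho *m (S *m A)).
  by rewrite -[P]mulmx1 -AS1 mulmxA PA -mulmxA mxtrace_mulC mulmxA.
have -> : S *m A = 1%:M - W by rewrite opprB addrC subrK.
rewrite mulmxBr mulmx1 raddfB /=; congr (_ - _).
by rewrite -KLW [rho *m _]mulmxA rhoK -mulmxA mxtrace_mulC -!mulmxA WK LK1 mulmx1.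
Qed.

End LinearAlgebra.

Lemma sum_ord3 (M : nmodType) (F : 'I_3 -> M) : \sum_k F k = F 0 + F 1 + F 2.
Proof.
rewrite !big_ord_recl big_ord0 addr0 addrA; congr (F _ + F _ + F _); exact: val_inj.
Qed.

Lemma ord3P (k : 'I_3) : [\/ k = 0, k = 1 | k = 2].
Proof.
by case: k => [[|[|[|//]]]] ?; [apply: Or31 | apply: Or32 | apply: Or33]; exact: val_inj.
Qed.

Lemma ord2P (k : 'I_2) : k = 0 \/ k = 1.
Proof. by case: k => [[|[|//]]] ?; [left | right]; exact: val_inj. Qed.

Lemma sum_mem_set (R : nzSemiRingType) (T : finType) (A : {set T}) :
  \sum_x (if x \in A then 1 else 0 : R) = #|A|%:R.
Proof. by rewrite -big_mkcond /= sumr_const. Qed.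

Section RigidityMatrix.
Variables (R : realType) (V : finType) (E : {set {set V}}) (p : V -> 'rV[R]_3).
Local Notation n := #|{: V * 'I_3}|.
Local Notation RM := (rigidity_matrix E p).

Lemma sum_coords (G : 'I_n -> R) : \sum_i G i = \sum_v \sum_k G (enum_rank (v, k)).
Proof.
rewrite (reindex enum_rank); last by exists enum_val => x _; rewrite ?enum_rankK ?enum_valK.
by rewrite pair_bigA; apply: eq_bigr => -[v k].
Qed.

Lemma rigidity_mx_edgeE i v k :
  RM (lshift _ i) (enum_rank (v, k)) =
  if v \in enum_val i then (p v - p (other (enum_val i) v)) 0 k else 0.
Proof. by rewrite mxE (unsplitK (inl _ : 'I_#|E| + 'I_#|{: V}|)) /= enum_rankK. Qed.

Lemma rigidity_mx_vertexE i v k :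
  RM (rshift _ i) (enum_rank (v, k)) =
  if v == enum_val i then (if k == 2 then 0 else p v 0 k) else 0.
Proof.
rewrite mxE (unsplitK (inr _ : 'I_#|E| + 'I_#|{: V}|)) /= enum_rankK /=.
by case: eqP => // ->.
Qed.

Lemma other_set2 (u w : V) : u != w -> other [set u; w] u = w.
Proof.
move=> uw; rewrite /other; case: pickP => [x|/(_ w)].
  by rewrite !inE => /andP[/negbTE xu /orP[/eqP xu'|/eqP //]]; rewrite xu' eqxx in xu.
by rewrite !inE eqxx orbT andbT eq_sym uw.
Qed.

Lemma card2_set2 (e : {set V}) w :
  #|e| = 2%N -> w \in e -> exists2 o, o != w & e = [set w; o].
Proof.
move=> e2 we; have /cards1P[o eo] : #|e :\ w| == 1%N.
  by move: (cardsD1 w e); rewrite we e2 add1n => -[->].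
have : o \in e :\ w by rewrite eo set11.
by rewrite !inE => /andP[ow _]; exists o; rewrite // -{1}(setD1K we) eo.
Qed.

(* [j = 0]: translation along the z-axis; [j = 1]: rotation about it. *)
Definition trivial_velocity (j : 'I_2) (v : V) (k : 'I_3) : R :=
  if j == 0 then (k == 2 :> 'I_3)%:R else [:: - yco (p v); xco (p v); 0]`_k.

Definition trivial_motion_mx : 'M[R]_(n, 2) :=
  \matrix_(i, j) trivial_velocity j (enum_val i).1 (enum_val i).2.

Lemma trivial_motion_mxE v k j : trivial_motion_mx (enum_rank (v, k)) j = trivial_velocity j v k.
Proof. by rewrite mxE enum_rankK. Qed.

Lemma trivial_motionP u : trivial_motion p u -> exists w, u = trivial_motion_mx *m w.
Proof.
move=> [a [b uE]]; exists (\col_j [:: a; b]`_j).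
apply/matrixP => i j; rewrite (ord1 j) -(enum_valK i); case: (enum_val i) => v k.
rewrite -[LHS]/(vel u v k) uE !mxE !big_ord_recl big_ord0 !trivial_motion_mxE !mxE /=.
by rewrite /trivial_velocity /=; case: (ord3P k) => ->; rewrite /=; ring.
Qed.

Lemma rigidity_mx_trivial : simple_graph E -> RM *m trivial_motion_mx = 0.
Proof.
move=> simpleE; apply/matrixP => i j; rewrite !mxE sum_coords.
rewrite -(splitK i); case: (split i) => k /=; last first.
  rewrite (bigD1 (enum_val k)) //= [X in _ + X]big1 => [|v vk]; last first.
    by apply: big1 => l _; rewrite rigidity_mx_vertexE (negbTE vk) mul0r.
  rewrite addr0 sum_ord3 !rigidity_mx_vertexE eqxx !trivial_motion_mxE /trivial_velocity.
  by rewrite /xco /yco /=; case: (ord2P j) => ->; rewrite /=; ring.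
set e := enum_val k; have /simpleE e2 : e \in E by exact: enum_valP.
have [u ue] : exists u, u \in e by apply/set0Pn; rewrite -card_gt0 e2.
have [o ou eE] := card2_set2 e2 ue.
under eq_bigr do under eq_bigr do rewrite rigidity_mx_edgeE trivial_motion_mxE -/e.
rewrite (eq_bigr (fun v => if v \in e then
    \sum_l (p v - p (other e v)) 0 l * trivial_velocity j v l else 0)); last first.
  by move=> v _; case: ifP => _ //; apply: big1 => l _; rewrite mul0r.
rewrite -big_mkcond /= eE big_setU1 /=; last by rewrite inE eq_sym.
rewrite big_set1 other_set2 1?eq_sym // setUC other_set2 // !sum_ord3.
by rewrite /trivial_velocity /xco /yco !mxE; case: (ord2P j) => ->; rewrite /=; ring.
Qed.

(* Reads the coefficients of a trivial motion off the velocity of [v0]. *)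
Definition motion_coords (v0 : V) : 'M[R]_(2, n) := \matrix_(i, c)
  if i == 0 then (c == enum_rank (v0, 2))%:R
  else - yco (p v0) * (c == enum_rank (v0, 0))%:R + xco (p v0) * (c == enum_rank (v0, 1))%:R.

Lemma motion_coords_supp v0 i v k :
  v != v0 -> motion_coords v0 i (enum_rank (v, k)) = 0.
Proof.
move=> vv0; have neq l : (enum_rank (v, k) == enum_rank (v0, l)) = false.
  by rewrite (inj_eq enum_rank_inj) xpair_eqE (negbTE vv0).
by rewrite mxE !neq /=; case: eqP => _; rewrite ?mulr0 ?addr0.
Qed.

Lemma motion_coordsK v0 : on_cylinder (p v0) -> motion_coords v0 *m trivial_motion_mx = 1%:M.
Proof.
move=> v0Y; apply/matrixP => i j; rewrite !mxE sum_coords (bigD1 v0) //=.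
rewrite [X in _ + X]big1 => [|v vv0]; last first.
  by apply: big1 => k _; rewrite motion_coords_supp ?mul0r.
rewrite addr0 sum_ord3 !trivial_motion_mxE !mxE !(inj_eq enum_rank_inj) !xpair_eqE eqxx /=.
move: v0Y; rewrite /on_cylinder /trivial_velocity /xco /yco => v0Y.
by case: (ord2P i) => ->; case: (ord2P j) => ->; rewrite /=; [ring.. | rewrite -[in RHS]v0Y; ring].
Qed.

End RigidityMatrix.

Section SymmetryAction.
Variables (R : realType) (V : finType) (E : {set {set V}}) (p : V -> 'rV[R]_3).
Local Notation n := #|{: V * 'I_3}|.
Local Notation m := (#|E| + #|{: V}|)%N.
Local Notation RM := (rigidity_matrix E p).

(* [T] fixes the z-axis, acting on it by [ez], and its xy-block is [[er c, -er s], [s, c]],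
   of determinant [er]: [T] scales the z-translation by [ez] and the rotation by [er]. *)
Record cylinder_block (T : 'M[R]_3) (ez er : R) : Prop := CylinderBlock {
  cb02 : T 0 2 = 0; cb12 : T 1 2 = 0; cb20 : T 2 0 = 0; cb21 : T 2 1 = 0;
  cb22 : T 2 2 = ez; cb01 : T 0 1 = - er * T 1 0; cb00 : T 0 0 = er * T 1 1;
  cb_sign : er ^+ 2 = 1 }.

Definition row_map (g : V -> V) (i : 'I_m) : 'I_m :=
  match split i with
  | inl k => lshift _ (enum_rank_in (enum_valP k) (g @: enum_val k))
  | inr k => rshift _ (enum_rank (g (enum_val k)))
  end.

Lemma row_map_edge g k :
  row_map g (lshift _ k) = lshift _ (enum_rank_in (enum_valP k) (g @: enum_val k)).
Proof. by rewrite /row_map (unsplitK (inl _ : 'I_#|E| + 'I_#|{: V}|)). Qed.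

Lemma row_map_vertex g k : row_map g (rshift _ k) = rshift _ (enum_rank (g (enum_val k))).
Proof. by rewrite /row_map (unsplitK (inr _ : 'I_#|E| + 'I_#|{: V}|)). Qed.

Lemma row_mapK (g g' : V -> V) : cancel g g' ->
  (forall e : {set V}, (g @: e \in E) = (e \in E)) -> cancel (row_map g) (row_map g').
Proof.
move=> gK gE i; rewrite -(splitK i); case: (split i) => k /=; last first.
  by rewrite !row_map_vertex enum_rankK gK enum_valK.
have gkE : g @: enum_val k \in E by rewrite gE enum_valP.
have g'gk : g' @: (g @: enum_val k) = enum_val k by rewrite -imset_comp (eq_imset _ gK) imset_id.
rewrite !row_map_edge; congr lshift; apply: enum_val_inj.
by rewrite enum_rankK_in (enum_rankK_in _ gkE) g'gk ?enum_valP.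
Qed.

Definition row_action_mx (g : V -> V) : 'M[R]_m := \matrix_(i, j) (i == row_map g j)%:R.

Variables (f h : V -> V) (T : 'M[R]_3) (ez er : R).
Hypotheses (fK : cancel f h) (hK : cancel h f).
Hypothesis fE : forall e : {set V}, (f @: e \in E) = (e \in E).
Hypothesis pf : forall v, p (f v) = (T *m (p v)^T)^T.
Hypothesis T_orth : T *m T^T = 1%:M.
Hypothesis T_block : cylinder_block T ez er.

Let f_inj : injective f := can_inj fK.

Let hE (e : {set V}) : (h @: e \in E) = (e \in E).
Proof. by rewrite -fE -imset_comp (eq_imset _ hK) imset_id. Qed.

Lemma coord_mapE v k : p (f v) 0 k = \sum_j T k j * p v 0 j.
Proof. by rewrite pf !mxE; apply: eq_bigr => j _; rewrite !mxE. Qed.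

Lemma orth_coords (d : 'I_3 -> R) l : \sum_k (\sum_j T k j * d j) * T k l = d l.
Proof.
have TtT j : \sum_k T k j * T k l = (j == l)%:R.
  move/matrixP: (mulmx1C T_orth) => /(_ j l); rewrite !mxE => <-.
  by apply: eq_bigr => k _; rewrite mxE.
under eq_bigr do rewrite mulr_suml.
rewrite exchange_big /=.
under eq_bigr do under eq_bigr do rewrite mulrAC.
under eq_bigr do rewrite -mulr_suml TtT.
rewrite (bigD1 l) //= eqxx mul1r big1 ?addr0 // => j /negbTE ->.
by rewrite mul0r.
Qed.

Lemma horizontal_coord_map v k :
  (if k == 2 then 0 else p (f v) 0 k) = \sum_j T k j * (if j == 2 then 0 else p v 0 j).
Proof.
case: T_block => T02 T12 T20 T21 _ _ _ _.
by rewrite coord_mapE !sum_ord3; case: (ord3P k) => ->; rewrite /= ?T02 ?T12 ?T20 ?T21; ring.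
Qed.

Definition coord_action_mx : 'M[R]_n := \matrix_(i, j)
  if (enum_val i).1 == f (enum_val j).1 then T (enum_val i).2 (enum_val j).2 else 0.

Lemma mul_coord_actionE i w l :
  (RM *m coord_action_mx) i (enum_rank (w, l)) = \sum_k RM i (enum_rank (f w, k)) * T k l.
Proof.
rewrite mxE sum_coords (bigD1 (f w)) //= [X in _ + X]big1 ?addr0 => [|v vfw].
  by apply: eq_bigr => k _; rewrite [coord_action_mx _ _]mxE !enum_rankK /= eqxx.
by apply: big1 => k _; rewrite [coord_action_mx _ _]mxE !enum_rankK /= (negbTE vfw) mulr0.
Qed.

Lemma rigidity_mx_coord_action (simpleE : simple_graph E) r c :
  (RM *m coord_action_mx) (row_map f r) c = RM r c.
Proof.
rewrite -(enum_valK c); case: (enum_val c) => w l; rewrite mul_coord_actionE.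
rewrite -(splitK r); case: (split r) => k /=; last first.
  under eq_bigr do rewrite row_map_vertex rigidity_mx_vertexE enum_rankK (inj_eq f_inj).
  rewrite rigidity_mx_vertexE; case: eqP => [->|_]; last by apply: big1 => k' _; rewrite mul0r.
  by under eq_bigr do rewrite horizontal_coord_map; rewrite orth_coords.
rewrite row_map_edge rigidity_mx_edgeE; set e := enum_val k.
have eE : e \in E by exact: enum_valP.
have feE : f @: e \in E by rewrite fE.
under eq_bigr do rewrite rigidity_mx_edgeE (enum_rankK_in _ feE) (mem_imset _ _ f_inj).
case: ifP => we; last by apply: big1 => k' _; rewrite mul0r.
have [o ow ewo] := card2_set2 (simpleE _ eE) we.
have -> : f @: e = [set f w; f o] by rewrite ewo imsetU1 imset_set1.
rewrite ewo !other_set2 ?(inj_eq f_inj) 1?eq_sym // -(orth_coords (fun j => (p w - p o) 0 j)).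
apply: eq_bigr => k' _; congr (_ * _); rewrite !mxE !coord_mapE -sumrB.
by apply: eq_bigr => j _; rewrite !mxE mulrBr.
Qed.

Lemma rigidity_mx_intertwines (simpleE : simple_graph E) :
  row_action_mx f *m RM = RM *m coord_action_mx.
Proof.
apply/matrixP => i c; rewrite mxE (bigD1 (row_map h i)) //= big1 ?addr0 => [|j ji].
  by rewrite mxE (row_mapK hK hE) eqxx mul1r -{2}(row_mapK hK hE i) rigidity_mx_coord_action.
rewrite mxE; case: eqP => [ij|_]; last by rewrite mul0r.
by move: ji; rewrite ij (row_mapK fK fE) eqxx.
Qed.

Definition trivial_action_mx : 'M[R]_2 := diag_mx (\row_(j < 2) [:: ez; er]`_j).

Lemma coord_action_trivial :
  coord_action_mx *m trivial_motion_mx p = trivial_motion_mx p *m trivial_action_mx.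
Proof.
case: T_block => T02 T12 T20 T21 T22 T01 T00 er2.
apply/matrixP => c j; rewrite -(enum_valK c); case: (enum_val c) => v k.
rewrite mul_mx_diag !mxE sum_coords (bigD1 (h v)) //=.
rewrite [X in _ + X]big1 ?addr0 => [|w wv]; last first.
  apply: big1 => l _; rewrite mxE !enum_rankK /=.
  by case: eqP => [vfw|]; [move: wv; rewrite vfw fK eqxx | rewrite mul0r].
under eq_bigr do rewrite [coord_action_mx _ _]mxE !enum_rankK /= hK eqxx trivial_motion_mxE.
have pv k' : p v 0 k' = \sum_l T k' l * p (h v) 0 l by rewrite -{1}(hK v) coord_mapE.
rewrite !enum_rankK sum_ord3 /trivial_velocity /xco /yco /= !pv !sum_ord3.
case: (ord2P j) => ->; case: (ord3P k) => ->; rewrite /= ?T02 ?T12 ?T20 ?T21 ?T22 ?T00 ?T01.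
all: try ring.
by rewrite -[LHS]mul1r -er2; ring.
Qed.

Lemma mxtrace_row_action :
  \tr (row_action_mx f) = (#|[set e in E | f @: e == e]| + #|[set v | f v == v]|)%:R.
Proof.
rewrite /mxtrace big_split_ord /= natrD; congr (_ + _).
  have fixedP (k : 'I_#|E|) :
      (k == enum_rank_in (enum_valP k) (f @: enum_val k)) = (f @: enum_val k == enum_val k).
    have fkE : f @: enum_val k \in E by rewrite fE enum_valP.
    by apply/eqP/eqP => [kE | ->]; [rewrite {2}kE enum_rankK_in | rewrite enum_valK_in].
  under eq_bigr do rewrite mxE row_map_edge eq_lshift fixedP.
  rewrite -sum_mem_set -(big_enum_val (fun e : {set V} => (f @: e == e)%:R)) big_mkcond /=.
  by apply: eq_bigr => e _; rewrite inE; case: (e \in E); case: (_ == _).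
under eq_bigr do rewrite mxE row_map_vertex eq_rshift.
rewrite -sum_mem_set (reindex enum_rank); last first.
  by exists enum_val => x _; rewrite ?enum_rankK ?enum_valK.
apply: eq_bigr => v _; rewrite inE enum_rankK.
by rewrite (inj_eq enum_rank_inj) eq_sym; case: eqP.
Qed.

Lemma mxtrace_coord_action : \tr coord_action_mx = #|[set v | f v == v]|%:R * \tr T.
Proof.
rewrite /mxtrace sum_coords -sum_mem_set mulr_suml; apply: eq_bigr => v _.
rewrite inE eq_sym; under eq_bigr do rewrite mxE enum_rankK /=.
by case: eqP => _; rewrite ?mul1r // mul0r big1.
Qed.

Lemma fixed_count (simpleE : simple_graph E) v0 : on_cylinder (p v0) -> isostatic E p ->
  (#|[set e in E | f @: e == e]| + #|[set v | f v == v]|)%:R =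
    #|[set v | f v == v]|%:R * \tr T - (ez + er).
Proof.
move=> v0Y [rigid free]; rewrite -mxtrace_row_action -mxtrace_coord_action.
have -> : ez + er = \tr trivial_action_mx.
  by rewrite mxtrace_diag !big_ord_recl big_ord0 !mxE addr0.
apply: (mxtrace_intertwined free (rigidity_mx_trivial p simpleE) (motion_coordsK v0Y)).
- by move=> u /rigid /trivial_motionP.
- exact: rigidity_mx_intertwines.
- exact: coord_action_trivial.
Qed.

End SymmetryAction.

Section Sparsity.
Variables (R : realType) (V : finType) (E : {set {set V}}) (p : V -> 'rV[R]_3).
Local Notation n := #|{: V * 'I_3}|.
Local Notation m := (#|E| + #|{: V}|)%N.
Local Notation RM := (rigidity_matrix E p).

Definition subframework_rows (E' : {set {set V}}) (V' : {set V}) : {set 'I_m} :=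
  (@lshift _ _ @: [set k | enum_val k \in E']) :|: (@rshift _ _ @: [set k | enum_val k \in V']).

Definition vertex_coords (V' : {set V}) : {set 'I_n} := enum_rank @: setX V' [set: 'I_3].

Lemma card_enum_val_set (T : finType) (A : {pred T}) (B : {set T}) :
  B \subset A -> #|[set k : 'I_#|A| | enum_val k \in B]| = #|B|.
Proof.
move=> BA; rewrite -(card_imset _ enum_val_inj); congr #|pred_of_set _|.
apply/setP => x; apply/imsetP/idP => [[k] | xB]; first by rewrite inE => kB ->.
have xA : x \in A := subsetP BA x xB.
by exists (enum_rank_in xA x); rewrite ?inE enum_rankK_in.
Qed.

Lemma card_subframework_rows (E' : {set {set V}}) (V' : {set V}) :
  E' \subset E -> #|subframework_rows E' V'| = (#|E'| + #|V'|)%N.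
Proof.
move=> E'E; rewrite cardsU !card_imset; [|exact: rshift_inj|exact: lshift_inj].
rewrite !card_enum_val_set ?subset_predT //.
suff -> : @lshift #|E| #|{: V}| @: [set k | enum_val k \in E']
    :&: @rshift #|E| #|{: V}| @: [set k | enum_val k \in V'] = set0.
  by rewrite cards0 subn0.
apply/setP => i; rewrite !inE; apply/andP => -[/imsetP[a _ ->] /imsetP[b _ /eqP]].
by rewrite eq_lrshift.
Qed.

Lemma mem_vertex_coords (V' : {set V}) v k : (enum_rank (v, k) \in vertex_coords V') = (v \in V').
Proof. by rewrite mem_imset ?in_setX ?inE ?andbT //; exact: enum_rank_inj. Qed.

Lemma card_vertex_coords (V' : {set V}) : #|vertex_coords V'| = (3 * #|V'|)%N.
Proof. by rewrite card_imset ?cardsX ?cardsT ?card_ord 1?mulnC //; exact: enum_rank_inj. Qed.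

Lemma rigidity_mx_subframework (E' : {set {set V}}) (V' : {set V}) i c :
  (forall e, e \in E' -> e \subset V') -> i \in subframework_rows E' V' ->
  c \notin vertex_coords V' -> RM i c = 0.
Proof.
move=> E'V' iI; rewrite -(enum_valK c); case: (enum_val c) => w l.
rewrite mem_vertex_coords => wV'; move: iI; rewrite inE => /orP[] /imsetP[k]; rewrite inE => kE ->.
  by rewrite rigidity_mx_edgeE; case: ifP => // /(subsetP (E'V' _ kE)); rewrite (negbTE wV').
by rewrite rigidity_mx_vertexE; case: eqP => // wk; rewrite wk kE in wV'.
Qed.

(* A subframework on [V'] has independent rows and, through any of its vertices,
   a two-dimensional space of trivial motions, so it has at most [3 |V'| - 2] rows. *)
Lemma sparse22_of_independent :
  simple_graph E -> (forall v, on_cylinder (p v)) -> independent E p -> sparse22 E.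
Proof.
move=> simpleE onY free V' E' V'0 E'E E'V'.
set I := subframework_rows E' V'; set W := vertex_coords V'.
pose sel (j : 'I_#|W|) := enum_val j.
pose A := rowsub (fun i : 'I_#|I| => enum_val i) RM.
have rankA : \rank A = #|I| by apply/eqP/row_free_rowsub => //; exact: enum_val_inj.
have A0 i c : c \notin W -> A i c = 0.
  by move=> cW; rewrite mxE (rigidity_mx_subframework E'V' (enum_valP i) cW).
have rankAC : (\rank A <= \rank (colsub sel A))%N.
  by rewrite -{1}[A]mulmx1 -(mulmx_colsub_supp 1%:M A0) mxrankM_maxl.
have AK0 : colsub sel A *m rowsub sel (trivial_motion_mx p) = 0.
  by rewrite (mulmx_colsub_supp _ A0) mul_rowsub_mx rigidity_mx_trivial // rowsubE mulmx0.
have [v1 v1V'] := set0Pn _ V'0.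
have coords0 i c : c \notin W -> motion_coords p v1 i c = 0.
  rewrite -(enum_valK c); case: (enum_val c) => v k; rewrite mem_vertex_coords => vV'.
  by rewrite motion_coords_supp //; apply: contraNneq vV' => ->.
have rankK : (2 <= \rank (rowsub sel (trivial_motion_mx p)))%N.
  rewrite -[X in (X <= _)%N](mxrank1 R 2) -(motion_coordsK (onY v1)).
  by rewrite -(mulmx_colsub_supp _ coords0) mxrankM_maxr.
have := mulmx0_rank_max AK0; have := card_vertex_coords V'.
have := card_subframework_rows V' E'E; rewrite -/I -/W; lia.
Qed.

End Sparsity.

Section SymmetryOperations.
Variable R : realType.

Lemma mxtrace3 (T : 'M[R]_3) : \tr T = T 0 0 + T 1 1 + T 2 2.
Proof. exact: sum_ord3. Qed.

Lemma refl_vertE (a b : R) i j :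
  refl_vert a b i j = (i == j)%:R - 2 * ([:: a; b; 0]`_i * [:: a; b; 0]`_j).
Proof. by rewrite !mxE big_ord1 !mxE. Qed.

Lemma halfturnE (a b : R) i j :
  halfturn a b i j = 2 * ([:: a; b; 0]`_i * [:: a; b; 0]`_j) - (i == j)%:R.
Proof. by rewrite !mxE big_ord1 !mxE. Qed.

Lemma halfturn_refl_vert (a b : R) : halfturn a b = - refl_vert a b.
Proof. by rewrite /halfturn /refl_vert opprB. Qed.

Lemma cylinder_block1 : cylinder_block (1%:M : 'M[R]_3) 1 1.
Proof. by split; rewrite ?mxE /=; ring. Qed.

Lemma cylinder_block_inversion : cylinder_block (inversion : 'M[R]_3) (-1) 1.
Proof. by split; rewrite ?mxE /=; ring. Qed.

Lemma mxtrace_inversion : \tr (inversion : 'M[R]_3) = -3.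
Proof. by rewrite mxtrace3 !mxE /=; ring. Qed.

Lemma cylinder_block_refl_horiz : cylinder_block (refl_horiz : 'M[R]_3) (-1) 1.
Proof. by split; rewrite ?mxE /=; ring. Qed.

Lemma mxtrace_refl_horiz : \tr (refl_horiz : 'M[R]_3) = 1.
Proof. by rewrite mxtrace3 !mxE /=; ring. Qed.

Lemma cylinder_block_refl_vert (a b : R) : unit2 a b -> cylinder_block (refl_vert a b) 1 (-1).
Proof.
rewrite /unit2 !expr2 => ab1; split; rewrite ?refl_vertE /=; try ring.
lra.
Qed.

Lemma mxtrace_refl_vert (a b : R) : unit2 a b -> \tr (refl_vert a b) = 1.
Proof. rewrite /unit2 !expr2 mxtrace3 !refl_vertE /= => ab1; lra. Qed.

Lemma cylinder_block_halfturn (a b : R) : unit2 a b -> cylinder_block (halfturn a b) (-1) (-1).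
Proof.
rewrite /unit2 !expr2 => ab1; split; rewrite ?halfturnE /=; try ring.
lra.
Qed.

Lemma mxtrace_halfturn (a b : R) : unit2 a b -> \tr (halfturn a b) = -1.
Proof. by rewrite halfturn_refl_vert raddfN /= => /mxtrace_refl_vert ->. Qed.

End SymmetryOperations.

Lemma tight22_of_isostatic (R : realType) (V : finType) (E : {set {set V}}) (p : V -> 'rV[R]_3) :
  (0 < #|{: V}|)%N -> simple_graph E -> (forall v, on_cylinder (p v)) -> isostatic E p ->
  tight22 E.
Proof.
move=> /card_gt0P[v0 _] simpleE onY iso; split.
  exact: sparse22_of_independent simpleE onY iso.2.
have idE (e : {set V}) : (id @: e \in E) = (e \in E) by rewrite imset_id.
have p1 v : p (id v) = ((1%:M : 'M[R]_3) *m (p v)^T)^T by rewrite mul1mx trmxK.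
have orth1 : (1%:M : 'M[R]_3) *m 1%:M^T = 1%:M by rewrite trmx1 mulmx1.
have := fixed_count (fun=> erefl) (fun=> erefl) idE p1 orth1 (cylinder_block1 R) simpleE
  (onY v0) iso.
have -> : [set e in E | id @: e == e] = E by apply/setP => e; rewrite inE imset_id eqxx andbT.
have -> : [set v | id v == v] = [set: V] by apply/setP => v; rewrite !inE eqxx.
rewrite cardsT mxtrace1 => count.
have : (#|E| + #|V| + 2)%N%:R = (3 * #|V|)%N%:R :> R.
  by move: count; rewrite natrM !natrD; lra.
by move/eqP; rewrite eqr_nat => /eqP; lia.
Qed.

Section SymmetricFramework.
Variables (R : realType) (gT : finGroupType) (V : finType) (E : {set {set V}}).
Variables (phi : gT -> V -> V) (tau : gT -> 'M[R]_3) (p : V -> 'rV[R]_3).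
Hypotheses (V_gt0 : (0 < #|{: V}|)%N) (simpleE : simple_graph E) (phi_aut : aut_hom E phi).
Hypotheses (tau_hom : orth_inj_hom tau) (onY : forall v, on_cylinder (p v)).
Hypotheses (symmetric : gamma_symmetric phi tau p) (iso : isostatic E p).

Lemma phi1 v : phi 1%g v = v.
Proof. by case: phi_aut => phi_inj [_ phiM]; apply: (phi_inj 1%g); rewrite -phiM mulg1. Qed.

Lemma phiK g : cancel (phi g) (phi g^-1).
Proof. by case: phi_aut => _ [_ phiM] v; rewrite -phiM mulVg phi1. Qed.

Lemma phiVK g : cancel (phi g^-1) (phi g).
Proof. by case: phi_aut => _ [_ phiM] v; rewrite -phiM mulgV phi1. Qed.

Lemma symmetric_fixed_count g T ez er : tau g = T -> cylinder_block T ez er ->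
  (#|fixed_edges E phi g| + #|fixed_vertices phi g|)%:R =
    #|fixed_vertices phi g|%:R * \tr T - (ez + er).
Proof.
have [v0 _] := card_gt0P V_gt0; case: phi_aut => _ [phiE _]; case: tau_hom => tau_orth _.
move=> <- block; apply: (fixed_count (phiK g) (phiVK g) (phiE g) (symmetric g) (tau_orth g) block
  simpleE (onY v0) iso).
Qed.

Lemma no_fixed_edge_of_trace1 g T ez er : tau g = T ->
  cylinder_block T ez er -> \tr T = 1 -> ez + er = 0 -> fixed_edges E phi g = set0.
Proof.
move=> tau_g /(symmetric_fixed_count tau_g) + tr1 e0; rewrite tr1 e0 mulr1 subr0 => /eqP.
by rewrite eqr_nat => /eqP count; apply/cards0_eq; lia.
Qed.

Lemma no_fixed_edge_inversion g : tau g = inversion -> fixed_edges E phi g = set0.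
Proof.
move=> /symmetric_fixed_count/(_ (cylinder_block_inversion R)).
rewrite mxtrace_inversion => count.
have : (#|fixed_edges E phi g| + 4 * #|fixed_vertices phi g|)%N%:R = 0%:R :> R.
  by move: count; rewrite !(natrD _ #|_|); lra.
by move/eqP; rewrite eqr_nat addn_eq0 => /andP[/eqP/cards0_eq].
Qed.

Lemma no_fixed_edge_refl_vert g a b :
  unit2 a b -> tau g = refl_vert a b -> fixed_edges E phi g = set0.
Proof.
move=> ab1 tau_g.
exact: no_fixed_edge_of_trace1 tau_g (cylinder_block_refl_vert ab1) (mxtrace_refl_vert ab1)
  (addrN 1).
Qed.

Lemma no_fixed_edge_refl_horiz g : tau g = refl_horiz -> fixed_edges E phi g = set0.
Proof.
move=> tau_g.
exact: no_fixed_edge_of_trace1 tau_g (cylinder_block_refl_horiz R) (mxtrace_refl_horiz R) (addNr 1).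
Qed.

Lemma fixed_count_halfturn g a b : unit2 a b -> tau g = halfturn a b ->
  (#|fixed_edges E phi g| + 2 * #|fixed_vertices phi g| = 2)%N.
Proof.
move=> ab1 /symmetric_fixed_count/(_ (cylinder_block_halfturn ab1)).
rewrite (mxtrace_halfturn ab1) => count.
have : (#|fixed_edges E phi g| + 2 * #|fixed_vertices phi g|)%N%:R = 2%:R :> R.
  by move: count; rewrite !(natrD _ #|_|); lra.
by move/eqP; rewrite eqr_nat => /eqP.
Qed.

Lemma fixed_cases_halfturn g a b : unit2 a b -> tau g = halfturn a b ->
  (#|fixed_edges E phi g| = 2%N /\ fixed_vertices phi g = set0) \/
  (fixed_edges E phi g = set0 /\ #|fixed_vertices phi g| = 1%N).
Proof.
move=> ab1 /(fixed_count_halfturn ab1).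
case: (#|fixed_vertices phi g|) (@cards0_eq _ (fixed_vertices phi g))
  (@cards0_eq _ (fixed_edges E phi g)) => [|[|k]] FV0 FE0 count.
- by left; split; [lia | exact: FV0].
- by right; split => //; apply: FE0; lia.
- lia.
Qed.

Lemma not_fixed_by_opposites g g' v :
  tau g = - tau g' -> phi g v = v -> phi g' v = v -> False.
Proof.
move=> tau_opp gv g'v; have pv j : p v 0 j = - p v 0 j.
  rewrite -{1}gv -{2}g'v !(coord_mapE (symmetric _)) tau_opp -sumrN.
  by apply: eq_bigr => i _; rewrite mxE mulNr.
have := onY v; rewrite /on_cylinder /xco /yco.
have x0 : p v 0 0 = 0 by have := pv 0; lra.
have y0 : p v 0 1 = 0 by have := pv 1; lra.
by rewrite x0 y0 expr2 mul0r addr0 => /eqP; rewrite eq_sym oner_eq0.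
Qed.

Lemma fixed_halfturn_C2h g gs a b : unit2 a b ->
  tau g = halfturn a b -> tau gs = refl_vert a b ->
  #|fixed_edges E phi g| = 2%N /\ fixed_vertices phi g = set0.
Proof.
move=> ab1 tau_g tau_gs; have count := fixed_count_halfturn ab1 tau_g.
case: phi_aut => _ [_ phiM]; case: tau_hom => _ [tauM tau_inj].
have tau_opp : tau g = - tau gs by rewrite tau_g tau_gs halfturn_refl_vert.
have comm : (g * gs = gs * g)%g by apply: tau_inj; rewrite !tauM tau_opp mulNmx mulmxN.
suff FV1 : #|fixed_vertices phi g| != 1%N by split; [|apply/cards0_eq]; lia.
apply/negP => /cards1P[v FVv]; have : v \in fixed_vertices phi g by rewrite FVv set11.
rewrite inE => /eqP gv; have : phi gs v \in fixed_vertices phi g by rewrite inE -phiM comm phiM gv.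
by rewrite FVv inE => /eqP /(not_fixed_by_opposites tau_opp gv).
Qed.

End SymmetricFramework.

Theorem theorem3p8 (R : realType) (gT : finGroupType) (V : finType)
  (E : {set {set V}}) (phi : gT -> V -> V) (tau : gT -> 'M[R]_3)
  (p : V -> 'rV[R]_3) :
  (0 < #|{: V}|)%N ->
  simple_graph E ->
  aut_hom E phi ->
  orth_inj_hom tau ->
  allowed_group tau ->
  framework_on_Y E p ->
  gamma_symmetric phi tau p ->
  isostatic E p ->
  let no_fixed_edge g := fixed_edges E phi g = set0 in
  let two_edges_no_vertex g :=
    #|fixed_edges E phi g| = 2%N /\ fixed_vertices phi g = set0 in
  let c2_cond g :=
    (#|fixed_edges E phi g| = 2%N /\ fixed_vertices phi g = set0) \/
    (fixed_edges E phi g = set0 /\ #|fixed_vertices phi g| = 1%N) in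
  tight22 E /\
  (is_Ci tau -> forall g, tau g = inversion -> no_fixed_edge g) /\
  (forall a b, is_Cs_vert tau a b -> forall g, tau g = refl_vert a b -> no_fixed_edge g) /\
  (is_Cs_horiz tau -> forall g, tau g = refl_horiz -> no_fixed_edge g) /\
  (forall a b, is_C2 tau a b -> forall g, tau g = halfturn a b -> c2_cond g) /\
  (forall a b c d, is_C2v tau a b c d -> forall g,
     (tau g = refl_vert a b -> no_fixed_edge g) /\
     (tau g = refl_horiz -> no_fixed_edge g) /\
     (tau g = halfturn c d -> c2_cond g)) /\
  (forall a b, is_C2h tau a b -> forall g,
     (tau g = refl_vert a b -> no_fixed_edge g) /\
     (tau g = inversion -> no_fixed_edge g) /\
     (tau g = halfturn a b -> two_edges_no_vertex g)).
Proof.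
move=> V_gt0 simpleE aut tau_hom _ [onY _] sym iso nfe tenv c2c.
split; first exact: tight22_of_isostatic.
split; first by move=> _ g; apply: no_fixed_edge_inversion.
split; first by move=> a b [ab1 _] g; apply: no_fixed_edge_refl_vert.
split; first by move=> _ g; apply: no_fixed_edge_refl_horiz.
split; first by move=> a b [ab1 _] g; apply: fixed_cases_halfturn.
split.
  move=> a b c d [ab1 [cd1 _]] g; split; first by apply: no_fixed_edge_refl_vert.
  by split; [apply: no_fixed_edge_refl_horiz | apply: fixed_cases_halfturn].
move=> a b [ab1 img] g; split; first by apply: no_fixed_edge_refl_vert.
split; first by apply: no_fixed_edge_inversion.
have [gs tau_gs] : exists gs, tau gs = refl_vert a b by apply/img; rewrite !inE eqxx orbT.
move=> tau_g; exact: (fixed_halfturn_C2h V_gt0 simpleE aut tau_hom onY sym iso ab1 tau_g tau_gs).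
Qed.
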